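(* Let $F$ be a finite field of characteristic $2$, let $n\ge 1$, and let $R$ be an even integer. Then there is a finite set of homogeneous polynomials of degree $R+1$ in the coefficients $a_{ij}$ ($1\le i\le j\le n$), with coefficients in $F$, such that for every quadratic form $Q(x_1,\ldots,x_n)=\sum_{1\le i\le j\le n}a_{ij}x_ix_j$ over $F$, these polynomials all vanish at $(a_{ij})$ if and only if $\mathrm{Rank}(Q)\le R$.
   Context: The rank of a quadratic form $Q$ over a field $F$ is the minimal integer $m$ such that there exist a quadratic form $Q'$ over $F$ in $m$ variables and linear forms $L_1,\ldots,L_m$ over $F$ with $Q(x_1,\ldots,x_n)=Q'(L_1,\ldots,L_m)$. *)

From HB Require Import structures.
From mathcomp Require Import all_boot all_order all_algebra.
Set Implicit Arguments. Unset Strict Implicit. Unset Printing Implicit Defensive.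
Import Order.TTheory GRing.Theory.
Local Open Scope ring_scope.

(* Index set of the coefficients a_ij, 1 <= i <= j <= n (0-based here). *)
Definition qvar (n : nat) := {p : 'I_n * 'I_n | (p.1 <= p.2)%N}.

(* Coefficient of the monomial x_i x_j (i <= j) in the polynomial x^T M x. *)
Definition qf_coef (F : pzRingType) (n : nat) (M : 'M[F]_n) (i j : 'I_n) : F :=
  if i == j then M i i else M i j + M j i.

(* The quadratic form Q = sum_{i<=j} a_ij x_i x_j (given by a) is, as a
   polynomial, equal to Q'(L_1,...,L_m), where Q'(y) = y^T B y is an arbitrary
   quadratic form in m variables and L = C x are m linear forms. *)
Definition qf_repr (F : finNzRingType) (n : nat) (a : qvar n -> F) (m : nat) : bool :=
  [exists B : 'M[F]_m, exists C : 'M[F]_(m, n),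
     [forall v : qvar n, qf_coef (C^T *m B *m C) (sval v).1 (sval v).2 == a v]].

Lemma qf_repr_n (F : finNzRingType) (n : nat) (a : qvar n -> F) :
  exists m, qf_repr a m.
Proof.
exists n; apply/existsP.
pose B : 'M[F]_n := \matrix_(i, j) (if insub (i, j) is Some v then a v else 0).
exists B; apply/existsP; exists 1%:M; apply/forallP => v.
rewrite trmx1 mul1mx mulmx1 /qf_coef /B !mxE.
case: v => [[i j] /= hij].
have Hs : forall (k l : 'I_n) (h : (k <= l)%N), insub (k, l) = Some (exist _ (k, l) h : qvar n).
  by move=> k l h; rewrite insubT /=; congr Some; apply: val_inj.
case: (eqVneq i j) => [eij|neij].
  by subst j; rewrite (Hs _ _ hij).
rewrite (Hs _ _ hij) insubF ?addr0 //=.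
by apply/negbTE; rewrite -ltnNge ltn_neqAle hij andbT.
Qed.

Definition qf_rank (F : finNzRingType) (n : nat) (a : qvar n -> F) : nat :=
  ex_minn (qf_repr_n a).

(* Homogeneous polynomials of degree d in the variables indexed by V, with
   coefficients in F: a coefficient for each exponent vector e : V -> nat
   (exponents are < d.+1), nonzero only on monomials of total degree d. *)
Record hpoly (F : pzRingType) (V : finType) (d : nat) := HPoly {
  hcoef : {ffun {ffun V -> 'I_d.+1} -> F};
  hcoef_homog : forall e, hcoef e != 0 -> (\sum_(v : V) (e v : nat))%N = d
}.

Definition heval (F : comRingType) (V : finType) (d : nat)
    (p : hpoly F V d) (x : V -> F) : F :=
  \sum_(e : {ffun V -> 'I_d.+1}) hcoef p e * \prod_(v : V) x v ^+ (e v : nat).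

From Stdlib Require List.
From HB Require Import structures.
From mathcomp Require Import all_boot all_order all_algebra all_field perm.
From mathcomp Require Import ring zify.
Import GRing.Theory.
Set Implicit Arguments. Unset Strict Implicit. Unset Printing Implicit Defensive.
Local Open Scope ring_scope.

(* For a (2k+1) x (2k+1) matrix N put D(N) = sum_{i<=j} N'_ij adj(N + N^T)_ij,
   where N'_ij are the coefficients of the form x N x^T.  The equations are
   a |-> D(C A C^T) for all (2k+1) x n matrices C over F, with A = A(a) the
   upper-triangular matrix of the form Q_a.
   - D(N) vanishes whenever the form of N factors through fewer than 2k+1
     linear forms: such a form has a nonzero isotropic vector in the radical
     of its polar form, and then adj(N + N^T) is either 0 or proportional to
     w^T w, which turns D(N) into a multiple of Q_N(w) = 0.
   - In characteristic 2, splitting off hyperbolic planes shows that either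
     Q_a factors through 2k forms or some C puts C A C^T in the normal form
     x_1x_2 + ... + x_{2k-1}x_{2k} + c x_{2k+1}^2 with c != 0, on which D is
     c times a nonzero constant.
   - D(C A C^T) is a homogeneous polynomial of degree 2k+1 in the a_ij,
     since D is a sum of products of 2k+1 entries, all linear in a. *)

Section PolynomialFunctions.

Variables (F : comNzRingType) (V : finType) (d : nat).
Implicit Types (f g : (V -> F) -> F).

(* [f] is given, as a function of the point [a : V -> F], by a homogeneous
   polynomial of degree [d]; the polynomial is carried as a witness, so that
   a polynomial can be chosen for each member of a family of such functions. *)
Definition poly_fun f := {p : hpoly F V d | forall a, heval p a = f a}.

Lemma poly_fun_ext f g : (forall a, f a = g a) -> poly_fun f -> poly_fun g.
Proof. by move=> fg [p hp]; exists p => a; rewrite hp fg. Qed.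

Lemma poly_fun0 : poly_fun (fun _ => 0).
Proof.
have homog e : ([ffun _ => 0] : {ffun {ffun V -> 'I_d.+1} -> F}) e != 0 ->
    (\sum_(v : V) (e v : nat))%N = d by rewrite ffunE eqxx.
by exists (HPoly homog) => a; rewrite /heval big1 // => e _; rewrite ffunE mul0r.
Qed.

Lemma poly_funD f g : poly_fun f -> poly_fun g -> poly_fun (fun a => f a + g a).
Proof.
case=> p hp [q hq].
have homog e : ([ffun e => hcoef p e + hcoef q e]
    : {ffun {ffun V -> 'I_d.+1} -> F}) e != 0 -> (\sum_(v : V) (e v : nat))%N = d.
  rewrite ffunE; have [->|/hcoef_homog//] := eqVneq (hcoef p e) 0.
  by rewrite add0r; exact: hcoef_homog.
exists (HPoly homog) => a; rewrite /heval -hp -hq -big_split /=.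
by apply: eq_bigr => e _; rewrite ffunE mulrDl.
Qed.

Lemma poly_funZ (c : F) f : poly_fun f -> poly_fun (fun a => c * f a).
Proof.
case=> p hp.
have homog e : ([ffun e => c * hcoef p e]
    : {ffun {ffun V -> 'I_d.+1} -> F}) e != 0 -> (\sum_(v : V) (e v : nat))%N = d.
  rewrite ffunE; have [->|/hcoef_homog//] := eqVneq (hcoef p e) 0.
  by rewrite mulr0 eqxx.
exists (HPoly homog) => a; rewrite /heval -hp mulr_sumr.
by apply: eq_bigr => e _; rewrite ffunE mulrA.
Qed.

Lemma poly_fun_sum (I : Type) (r : seq I) (P : pred I) (G : I -> (V -> F) -> F) :
  (forall i, P i -> poly_fun (G i)) -> poly_fun (fun a => \sum_(i <- r | P i) G i a).
Proof.
move=> hG; elim: r => [|x r IH].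
  by apply: poly_fun_ext poly_fun0 => a; rewrite big_nil.
case Px: (P x).
  by apply: poly_fun_ext (poly_funD (hG x Px) IH) => a; rewrite big_cons Px.
by apply: poly_fun_ext IH => a; rewrite big_cons Px.
Qed.

(* The exponent vector of the monomial \prod_k a (phi k): each variable [v]
   occurs as often as [phi] hits it. *)
Definition multiplicity (phi : {ffun 'I_d -> V}) : {ffun V -> 'I_d.+1} :=
  [ffun v => inord #|[pred k | phi k == v]|].

Lemma multiplicityE (phi : {ffun 'I_d -> V}) v :
  (multiplicity phi v : nat) = #|[pred k | phi k == v]|.
Proof.
rewrite ffunE inordK // ltnS.
by apply: leq_trans (max_card _) _; rewrite card_ord.
Qed.

Lemma multiplicity_sum (phi : {ffun 'I_d -> V}) :
  (\sum_(v : V) (multiplicity phi v : nat))%N = d.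
Proof.
rewrite -[RHS]card_ord -sum1_card (partition_big phi predT) //=.
by apply: eq_bigr => v _; rewrite multiplicityE sum1_card.
Qed.

Definition unit_pt (v : V) : V -> F := fun w => (w == v)%:R.

Definition lin_fun f := forall a, f a = \sum_(v : V) f (unit_pt v) * a v.

(* A product of [d] linear forms is a homogeneous polynomial of degree [d]:
   expand the product and collect the terms by their exponent vector. *)
Lemma poly_fun_prod (L : 'I_d -> (V -> F) -> F) :
  (forall k, lin_fun (L k)) -> poly_fun (fun a => \prod_(k < d) L k a).
Proof.
move=> linL; pose c k v := L k (unit_pt v).
pose hc := [ffun e : {ffun V -> 'I_d.+1} =>
   \sum_(phi : {ffun 'I_d -> V} | multiplicity phi == e) \prod_k c k (phi k)].
have homog e : hc e != 0 -> (\sum_(v : V) (e v : nat))%N = d.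
  rewrite ffunE; case: (pickP (fun phi => multiplicity phi == e)) => [phi /eqP <-|none].
    by rewrite multiplicity_sum.
  by rewrite (big_pred0 _ _ _ _ none) eqxx.
exists (HPoly homog) => a.
rewrite (eq_bigr (fun k => \sum_v c k v * a v)); last by move=> k _; rewrite -linL.
rewrite /heval /= bigA_distr_bigA /= (partition_big (@multiplicity) predT) //=.
apply: eq_bigr => e _; rewrite ffunE mulr_suml; apply: eq_bigr => phi /eqP <-.
rewrite big_split /=; congr (_ * _).
rewrite (partition_big phi predT) //=; apply: eq_bigr => v _.
by rewrite multiplicityE -prodr_const; apply: eq_bigr => k /eqP ->.
Qed.

Lemma lin_fun_ext f g : (forall a, f a = g a) -> lin_fun f -> lin_fun g.
Proof. by move=> e hf a; rewrite -e hf; apply: eq_bigr => v _; rewrite e. Qed.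

Lemma lin_fun0 : lin_fun (fun _ => 0).
Proof. by move=> a; rewrite big1 // => v _; rewrite mul0r. Qed.

Lemma lin_fun_coord (v : V) : lin_fun (fun a => a v).
Proof.
move=> a; rewrite (bigD1 v) //= big1 ?addr0; first by rewrite /unit_pt eqxx mul1r.
by move=> w hw; rewrite /unit_pt eq_sym (negbTE hw) mul0r.
Qed.

Lemma lin_funD f g : lin_fun f -> lin_fun g -> lin_fun (fun a => f a + g a).
Proof.
move=> hf hg a /=; rewrite [f a]hf [g a]hg -big_split /=.
by apply: eq_bigr => v _; rewrite mulrDl.
Qed.

Lemma lin_fun_sum (I : finType) (G : I -> (V -> F) -> F) (c : I -> F) :
  (forall i, lin_fun (G i)) -> lin_fun (fun a => \sum_(i : I) c i * G i a).
Proof.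
move=> hG a; rewrite (eq_bigr (fun i => \sum_v c i * G i (unit_pt v) * a v)); last first.
  by move=> i _; rewrite hG mulr_sumr; apply: eq_bigr => v _; rewrite mulrA.
by rewrite exchange_big /=; apply: eq_bigr => v _; rewrite mulr_suml.
Qed.

End PolynomialFunctions.

Section QuadraticForms.

Variable F : comNzRingType.

Definition qform p (M : 'M[F]_p) (u : 'rV[F]_p) : F := (u *m M *m u^T) 0 0.
Definition polar_mx p (M : 'M[F]_p) : 'M[F]_p := M + M^T.
Definition bform p (M : 'M[F]_p) (u w : 'rV[F]_p) : F := (u *m polar_mx M *m w^T) 0 0.

Lemma scalar_prod_tr p q (x : 'rV[F]_p) (M : 'M[F]_(p, q)) (y : 'rV[F]_q) :
  (x *m M *m y^T) 0 0 = (y *m M^T *m x^T) 0 0.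
Proof.
transitivity ((x *m M *m y^T)^T 0 0); first by rewrite [in RHS]mxE.
by rewrite !trmx_mul trmxK mulmxA.
Qed.

(* Entrywise addition, stated to rewrite a single sum of matrices. *)
Lemma addmx_entry p q (A B : 'M[F]_(p, q)) i j : (A + B) i j = A i j + B i j.
Proof. by rewrite mxE. Qed.

Lemma polar_mx_tr p (M : 'M[F]_p) : (polar_mx M)^T = polar_mx M.
Proof. by rewrite /polar_mx linearD /= trmxK addrC. Qed.

Lemma qformD p (M : 'M[F]_p) x y : qform M (x + y) = qform M x + qform M y + bform M x y.
Proof.
rewrite /qform /bform /polar_mx linearD /= !(mulmxDl, mulmxDr) !addmx_entry.
rewrite [(y *m M *m x^T) 0 0]scalar_prod_tr.
by ring.
Qed.

Lemma qformZ p (M : 'M[F]_p) c x : qform M (c *: x) = c ^+ 2 * qform M x.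
Proof. by rewrite /qform linearZ /= -!scalemxAl -scalemxAr !mxE mulrA expr2. Qed.

Lemma qform0 p (M : 'M[F]_p) : qform M 0 = 0.
Proof. by rewrite /qform !mul0mx mxE. Qed.

Lemma bformC p (M : 'M[F]_p) x y : bform M x y = bform M y x.
Proof. by rewrite /bform scalar_prod_tr polar_mx_tr. Qed.

Lemma bform_diag p (M : 'M[F]_p) x : bform M x x = qform M x *+ 2.
Proof. by rewrite /bform /qform mulmxDr mulmxDl addmx_entry -scalar_prod_tr mulr2n. Qed.

Lemma bformDl p (M : 'M[F]_p) x y z : bform M (x + y) z = bform M x z + bform M y z.
Proof. by rewrite /bform !mulmxDl addmx_entry. Qed.

Lemma bformZl p (M : 'M[F]_p) c x z : bform M (c *: x) z = c * bform M x z.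
Proof. by rewrite /bform -!scalemxAl mxE. Qed.

Lemma bformNl p (M : 'M[F]_p) x z : bform M (- x) z = - bform M x z.
Proof. by rewrite -scaleN1r bformZl mulN1r. Qed.

Lemma bformDr p (M : 'M[F]_p) x y z : bform M z (x + y) = bform M z x + bform M z y.
Proof. by rewrite bformC bformDl !(bformC _ z). Qed.

Lemma bformZr p (M : 'M[F]_p) c x z : bform M z (c *: x) = c * bform M z x.
Proof. by rewrite bformC bformZl bformC. Qed.

Lemma qform_congr p q (C : 'M[F]_(p, q)) (M : 'M[F]_q) y :
  qform (C *m M *m C^T) y = qform M (y *m C).
Proof. by rewrite /qform trmx_mul !mulmxA. Qed.

Lemma polar_mx_congr p q (C : 'M[F]_(p, q)) (M : 'M[F]_q) :
  polar_mx (C *m M *m C^T) = C *m polar_mx M *m C^T.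
Proof. by rewrite /polar_mx !trmx_mul trmxK mulmxA -mulmxDl -mulmxDr. Qed.

Lemma bform_congr p q (C : 'M[F]_(p, q)) (M : 'M[F]_q) x y :
  bform (C *m M *m C^T) x y = bform M (x *m C) (y *m C).
Proof. by rewrite /bform polar_mx_congr (trmx_mul y C) !mulmxA. Qed.

Lemma qform_block p1 p2 (P11 : 'M[F]_p1) P12 P21 (P22 : 'M[F]_p2) a b :
  qform (block_mx P11 P12 P21 P22) (row_mx a b) =
  qform P11 a + (a *m P12 *m b^T) 0 0 + (b *m P21 *m a^T) 0 0 + qform P22 b.
Proof.
rewrite /qform mul_row_block tr_row_mx mul_row_col !mulmxDl !addmx_entry.
by rewrite addrACA !addrA.
Qed.

Lemma qform_scalar1 (c : F) (a : 'rV[F]_1) : qform c%:M a = c * a 0 0 ^+ 2.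
Proof.
rewrite /qform mul_mx_scalar -scalemxAl mxE (mx11_scalar (a *m a^T)) mxE eqxx mulr1n.
by rewrite mxE big_ord1 mxE expr2.
Qed.

Lemma scalar_prod1 (a b : 'M[F]_1) : (a *m b^T) 0 0 = a 0 0 * b 0 0.
Proof. by rewrite mxE big_ord1 mxE. Qed.

Lemma congr_entry p q (C : 'M[F]_(p, q)) (N : 'M[F]_q) a b :
  (C *m N *m C^T) a b = (row a C *m N *m (row b C)^T) 0 0.
Proof.
rewrite !mxE; apply: eq_bigr => l _; rewrite !mxE; congr (_ * _).
by apply: eq_bigr => m _; rewrite !mxE.
Qed.

Lemma polar_congr_entry p q (C : 'M[F]_(p, q)) (M : 'M[F]_q) a b :
  polar_mx (C *m M *m C^T) a b = bform M (row a C) (row b C).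
Proof. by rewrite polar_mx_congr congr_entry. Qed.

Lemma qform_row_entry p q (C : 'M[F]_(p, q)) (M : 'M[F]_q) a :
  (C *m M *m C^T) a a = qform M (row a C).
Proof. exact: congr_entry. Qed.

Lemma bform_delta p (M : 'M[F]_p) (x : 'rV[F]_p) j :
  bform M x (delta_mx 0 j) = (x *m polar_mx M) 0 j.
Proof. by rewrite /bform trmx_delta -colE mxE. Qed.

Lemma bform_delta2 p (M : 'M[F]_p) i j :
  bform M (delta_mx 0 i) (delta_mx 0 j) = polar_mx M i j.
Proof. by rewrite bform_delta -rowE mxE. Qed.

Lemma qform_delta p (M : 'M[F]_p) i : qform M (delta_mx 0 i) = M i i.
Proof. by rewrite /qform -rowE trmx_delta -colE !mxE. Qed.

Lemma sum_square_triangle (V : nmodType) p (g : 'I_p -> 'I_p -> V) :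
  \sum_(i : 'I_p) \sum_(j : 'I_p) g i j =
  \sum_(i : 'I_p) \sum_(j : 'I_p | (i <= j)%N) (if i == j then g i i else g i j + g j i).
Proof.
have split_row (i : 'I_p) : \sum_(j : 'I_p) g i j =
    \sum_(j : 'I_p | (i <= j)%N) g i j + \sum_(j : 'I_p | (j < i)%N) g i j.
  rewrite (bigID (fun j : 'I_p => (i <= j)%N)) /=; congr (_ + _).
  by apply: eq_bigl => j; rewrite -ltnNge.
have fold_diag (i : 'I_p) : \sum_(j : 'I_p | (i <= j)%N) (if i == j then g i i else g i j + g j i)
    = \sum_(j : 'I_p | (i <= j)%N) g i j + \sum_(j : 'I_p | (i < j)%N) g j i.
  rewrite (eq_bigr (fun j => g i j + (if i == j then 0 else g j i))); last first.
    by move=> j _; case: eqP => [->|]; rewrite ?addr0.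
  rewrite big_split /=; congr (_ + _).
  rewrite big_mkcond [RHS]big_mkcond; apply: eq_bigr => j _.
  rewrite ltn_neqAle andbC; case: (i <= j)%N => //=.
  by have [->|ne] := eqVneq i j; rewrite ?eqxx // ne.
rewrite (eq_bigr _ (fun i _ => split_row i)) big_split /=.
rewrite [X in _ + X](exchange_big_dep predT) //= -big_split /=.
by apply: eq_bigr => i _; rewrite fold_diag.
Qed.

Lemma qform_coef p (M : 'M[F]_p) u :
  qform M u = \sum_(i : 'I_p) \sum_(j : 'I_p | (i <= j)%N) qf_coef M i j * (u 0 i * u 0 j).
Proof.
have -> : qform M u = \sum_i \sum_j M i j * (u 0 i * u 0 j).
  rewrite /qform mxE exchange_big /=; apply: eq_bigr => i _.
  rewrite mxE big_distrl /=; apply: eq_bigr => j _.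
  by rewrite !mxE (mulrC (u 0 j)) -mulrA.
rewrite sum_square_triangle; apply: eq_bigr => i _; apply: eq_bigr => j _.
by rewrite /qf_coef; case: eqP => [->|_] //; rewrite mulrDl (mulrC (u 0 j)).
Qed.

(* Over any commutative ring the coefficients of a quadratic form are
   determined by its values, via polarization. *)
Lemma qf_coef_eq p (M N : 'M[F]_p) :
  (forall u, qform M u = qform N u) -> forall i j, qf_coef M i j = qf_coef N i j.
Proof.
move=> h i j; rewrite /qf_coef; case: eqP => _; first by rewrite -!qform_delta h.
have polarize (K : 'M[F]_p) : K i j + K j i = qform K (delta_mx 0 i + delta_mx 0 j)
    - qform K (delta_mx 0 i) - qform K (delta_mx 0 j).
  by rewrite qformD bform_delta2 !addmx_entry mxE; ring.
by rewrite !polarize !h.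
Qed.

End QuadraticForms.

(* The upper-triangular matrix whose form is sum_{i<=j} a_ij x_i x_j. *)
Definition coef_mx (F : pzRingType) n (a : qvar n -> F) : 'M[F]_n :=
  \matrix_(i, j) (if insub (i, j) is Some v then a v else 0).

Lemma qf_coef_coef_mx (F : pzRingType) n (a : qvar n -> F) (v : qvar n) :
  qf_coef (coef_mx a) (sval v).1 (sval v).2 = a v.
Proof.
rewrite /qf_coef /coef_mx !mxE; case: v => [[i j] /= hij].
have insub_le (k l : 'I_n) (h : (k <= l)%N) :
    insub (k, l) = Some (exist _ (k, l) h : qvar n).
  by rewrite insubT /=; congr Some; apply: val_inj.
have [eij|neij] := eqVneq i j; first by subst j; rewrite (insub_le _ _ hij).
rewrite (insub_le _ _ hij) insubF ?addr0 //=.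
by apply/negbTE; rewrite -ltnNge ltn_neqAle hij andbT.
Qed.

Definition qform_factors (F : comNzRingType) p (M : 'M[F]_p) r :=
  exists (B : 'M[F]_r) (L : 'M[F]_(p, r)), forall u, qform M u = qform B (u *m L).

Lemma qform_coef_mx (F : comNzRingType) n (a : qvar n -> F) (N : 'M[F]_n) :
  (forall v : qvar n, qf_coef N (sval v).1 (sval v).2 = a v) ->
  forall u, qform (coef_mx a) u = qform N u.
Proof.
move=> h u; rewrite !qform_coef; apply: eq_bigr => i _; apply: eq_bigr => j hij.
by have := h (exist _ (i, j) hij); rewrite -(qf_coef_coef_mx a (exist _ (i, j) hij)) /= => ->.
Qed.

Lemma qf_repr_factors (F : finComNzRingType) n (a : qvar n -> F) r :
  qf_repr a r <-> qform_factors (coef_mx a) r.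
Proof.
split.
  case/existsP=> B /existsP [C /forallP h]; exists B, C^T => u.
  rewrite (@qform_coef_mx _ _ _ (C^T *m B *m C)); last by move=> v; apply/eqP.
  by rewrite -{2}(trmxK C) qform_congr.
case=> B [L h]; apply/existsP; exists B; apply/existsP; exists L^T; apply/forallP => v.
rewrite trmxK -(qf_coef_coef_mx a v); apply/eqP; apply: qf_coef_eq => u.
by rewrite qform_congr h.
Qed.

Lemma qf_rank_leP (F : finComNzRingType) n (a : qvar n -> F) R :
  (qf_rank a <= R)%N <-> exists2 r, (r <= R)%N & qform_factors (coef_mx a) r.
Proof.
rewrite /qf_rank; case: ex_minnP => m hm hmin; split.
  by move=> le; exists m => //; apply/qf_repr_factors.
by case=> r le /qf_repr_factors /hmin h; exact: leq_trans h le.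
Qed.

Lemma qform_factors_add (F : comNzRingType) p (M N : 'M[F]_p) s r
    (B1 : 'M[F]_s) (L1 : 'M[F]_(p, s)) :
  (forall u, qform M u = qform B1 (u *m L1) + qform N u) ->
  qform_factors N r -> qform_factors M (s + r).
Proof.
move=> splitM [B [L hN]]; exists (block_mx B1 0 0 B), (row_mx L1 L) => u.
rewrite mul_mx_row qform_block !mulmx0 !mul0mx [(0 : 'M_1) 0 0]mxE !addr0.
by rewrite splitM hN.
Qed.

Section Adjugate.

Variables (F : fieldType) (p : nat).
Implicit Types A : 'M[F]_p.

Lemma adj_eq0_rank_small A : (\rank A < p.-1)%N -> \adj A = 0.
Proof.
move=> lt; apply/matrixP => i j; rewrite !mxE /cofactor.
have [->|nz] := eqVneq (\det (row' j (col' i A))) 0; first by rewrite mulr0.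
have minor_full : \rank (row' j (col' i A)) = p.-1.
  by apply: mxrank_unit; rewrite unitmxE unitfE.
have minor_le : (\rank (row' j (col' i A)) <= \rank A)%N.
  apply: leq_trans (_ : (\rank (col' i A) <= _)%N).
    exact/mxrankS/(rowsub_sub (lift j)).
  rewrite -mxrank_tr tr_col' -[X in (_ <= X)%N]mxrank_tr.
  exact/mxrankS/(rowsub_sub (lift i)).
by move: minor_le; rewrite minor_full leqNgt lt.
Qed.

Lemma adj_sym_corank1 A (w : 'rV[F]_p) :
  A^T = A -> w != 0 -> w *m A = 0 -> (p.-1 <= \rank A)%N ->
  exists c, forall i j, \adj A i j = c * (w 0 i * w 0 j).
Proof.
move=> symA wnz wA rkA.
have detA : \det A = 0 by apply/eqP/det0P; exists w.
have adjA : \adj A *m A = 0 by rewrite mul_adj_mx detA; apply/matrixP => i j; rewrite !mxE mul0rn.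
have ker_w : (kermx A <= w)%MS.
  have rk_w : \rank w = 1%N by rewrite rank_rV wnz.
  have w_ker : (w <= kermx A)%MS by apply/sub_kermxP.
  have : (w == kermx A)%MS.
    rewrite -(mxrank_leqif_eq w_ker).2 rk_w eqn_leq -{1}rk_w mxrankS //=.
    by rewrite mxrank_ker; lia.
  by case/andP.
have [j0 wj0] : exists j0, w 0 j0 != 0.
  apply/existsP; apply: contraR wnz => /existsPn w0.
  by apply/eqP/rowP => j; rewrite mxE; apply/eqP; rewrite -[_ == 0]negbK w0.
(* each row of \adj A lies in the kernel of A, hence is a multiple of w *)
have row_prop i j : \adj A i j * w 0 j0 = \adj A i j0 * w 0 j.
  have [s /rowP rowE] : exists s, row i (\adj A) = s *: w.
    apply/sub_rVP; apply: submx_trans ker_w.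
    by apply/sub_kermxP; rewrite -row_mul adjA row0.
  by move: (rowE j) (rowE j0); rewrite !mxE => -> ->; rewrite mulrAC.
have adj_sym i j : \adj A i j = \adj A j i.
  by rewrite -[in RHS]symA -trmx_adj [RHS]mxE.
exists (\adj A j0 j0 / w 0 j0 ^+ 2) => i j.
apply: (mulIf (expf_neq0 2 wj0)); rewrite mulrAC divfK ?expf_neq0 //.
by rewrite expr2 mulrA row_prop mulrAC adj_sym row_prop -mulrA.
Qed.

End Adjugate.

(* The invariant separating rank <= 2k from rank 2k+1 in dimension 2k+1:
   D(N) = sum_{i<=j} N'_ij adj(N + N^T)_ij, with N'_ij the coefficients of the
   form of N; it is a polynomial of degree p in the entries of N. *)
Definition hdisc (F : comNzRingType) p (N : 'M[F]_p) : F :=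
  \sum_(i : 'I_p) \sum_(j : 'I_p | (i <= j)%N) qf_coef N i j * \adj (polar_mx N) i j.

Lemma hdisc_radical (F : fieldType) p (N : 'M[F]_p) (w : 'rV[F]_p) :
  w != 0 -> w *m polar_mx N = 0 -> qform N w = 0 -> hdisc N = 0.
Proof.
move=> wnz wA qw; rewrite /hdisc.
have [lt|ge] := ltnP (\rank (polar_mx N)) p.-1.
  rewrite (adj_eq0_rank_small lt) big1 // => i _.
  by rewrite big1 // => j _; rewrite mxE mulr0.
have [c adjE] := adj_sym_corank1 (polar_mx_tr N) wnz wA ge.
under eq_bigr => i _ do under eq_bigr => j _ do rewrite adjE mulrCA.
under eq_bigr => i _ do rewrite -mulr_sumr.
by rewrite -mulr_sumr -qform_coef qw mulr0.
Qed.

Definition partner (i : nat) : nat := if odd i then i.-1 else i.+1.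

Lemma partnerK : involutive partner.
Proof. by case=> [|i] //; rewrite /partner /=; case oi: (odd i) => /=; rewrite ?oi. Qed.

Lemma partner_lt k i : (i < k.*2)%N -> (partner i < k.*2)%N.
Proof.
rewrite /partner; case oi: (odd i) => h; first exact: leq_ltn_trans (leq_pred _) h.
rewrite ltn_neqAle h andbT; apply/eqP => e.
by move: (congr1 odd e); rewrite /= oi odd_double.
Qed.

Lemma partnerSS i : partner i.+2 = (partner i).+2.
Proof. by rewrite /partner /=; case: i => [|i] //=; case: (odd i). Qed.

Definition partner_perm k (i : 'I_(k.*2)) : 'I_(k.*2) := Ordinal (partner_lt (ltn_ord i)).

Lemma partner_perm_inj k : injective (@partner_perm k).
Proof. by move=> i j /(congr1 val) /(congr1 partner); rewrite /= !partnerK => /val_inj. Qed.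

(* The polar matrix of the normal form x_1x_2 + ... + x_{2k-1}x_{2k} + c x_{2k+1}^2
   in characteristic 2: k hyperbolic planes and a one-dimensional radical. *)
Definition hyp_mx (F : pzRingType) k : 'M[F]_(k.*2.+1) :=
  \matrix_(i, j) ((i < k.*2)%N && (j == partner i :> nat))%:R.

Lemma hyp_mx_tr (F : pzRingType) k : (hyp_mx F k)^T = hyp_mx F k.
Proof.
apply/matrixP => i j; rewrite !mxE.
suff -> : ((j < k.*2)%N && (i == partner j :> nat)) = ((i < k.*2)%N && (j == partner i :> nat)).
  by [].
by apply/andP/andP => -[h /eqP ->]; rewrite partner_lt ?partnerK.
Qed.

Lemma hyp_mxSS (F : pzRingType) k :
  hyp_mx F k.+1 = block_mx (\matrix_(i, j) (i != j)%:R : 'M[F]_2) 0 0 (hyp_mx F k)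
  :> 'M[F]_(2 + k.*2.+1).
Proof.
apply/matrixP => a b; rewrite -[a]splitK -[b]splitK.
case: (split a) => a'; case: (split b) => b'.
- by rewrite block_mxEul !mxE /=; case: a' => [[|[|]]] //; case: b' => [[|[|]]].
- by rewrite block_mxEur !mxE /=; case: a' => [[|[|]]].
- rewrite block_mxEdl !mxE /= partnerSS.
  by case: b' => [[|[|]]] //= _; case: (_ < _)%N.
- by rewrite block_mxEdr !mxE /= partnerSS !eqSS.
Qed.

Section HyperbolicAdjugate.

Variables (F : fieldType) (k : nat).
Local Notation J := (hyp_mx F k).

Lemma hyp_mx_det : \det J = 0.
Proof.
apply/eqP/det0P; exists (delta_mx 0 ord_max).
  by apply/eqP => /matrixP /(_ 0 ord_max); rewrite !mxE !eqxx => /eqP; rewrite oner_eq0.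
by rewrite -rowE; apply/rowP => j; rewrite !mxE /= ltnn.
Qed.

(* The adjugate of J is concentrated in its last diagonal entry, which is a
   signed permutation determinant, hence nonzero. *)
Lemma adj_hyp_mx_eq0 (i j : 'I_(k.*2.+1)) : (i < k.*2)%N || (j < k.*2)%N -> \adj J i j = 0.
Proof.
have adjJ : \adj J *m J = 0.
  by rewrite mul_adj_mx hyp_mx_det; apply/matrixP => a b; rewrite !mxE mul0rn.
have col_eq0 (a b : 'I_(k.*2.+1)) : (b < k.*2)%N -> \adj J a b = 0.
  move=> hb; have hpb : (partner b < k.*2.+1)%N := ltnW (partner_lt hb).
  have := congr1 (fun M : 'M[F]_(k.*2.+1) => M a (inord (partner b))) adjJ.
  rewrite mxE [RHS]mxE (bigD1 b) //= big1 ?addr0.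
    by rewrite [hyp_mx F k b _]mxE inordK // hb eqxx mulr1.
  move=> l hl; rewrite [hyp_mx F k l _]mxE inordK //; case: eqP => [e|]; last by rewrite andbF mulr0.
  by move: hl; rewrite -(inj_eq val_inj) /= -(partnerK l) -e partnerK eqxx.
case/orP => [hi|hj]; last exact: col_eq0.
by rewrite -[J]hyp_mx_tr -trmx_adj mxE col_eq0.
Qed.

Lemma adj_hyp_mx_max : \adj J ord_max ord_max != 0.
Proof.
rewrite mxE /cofactor.
have -> : row' ord_max (col' ord_max J) = perm_mx (perm (@partner_perm_inj k)).
  apply/matrixP => a b; rewrite !mxE permE /= /bump.
  have ha : (k.*2 <= a)%N = false by rewrite leqNgt (ltn_ord a).
  have hb : (k.*2 <= b)%N = false by rewrite leqNgt (ltn_ord b).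
  by rewrite ha hb !add0n (ltn_ord a) /= eq_sym -(inj_eq val_inj).
by rewrite det_perm mulf_neq0 // signr_eq0.
Qed.

End HyperbolicAdjugate.

(* On a matrix whose polar matrix is in normal form, D is the product of the
   coefficient of x_{2k+1}^2 with a nonzero constant. *)
Lemma hdisc_hyp_mx (F : fieldType) k (N : 'M[F]_(k.*2.+1)) :
  polar_mx N = hyp_mx F k -> N ord_max ord_max != 0 -> hdisc N != 0.
Proof.
move=> polN nz; rewrite /hdisc polN.
have below_max (i : 'I_(k.*2.+1)) : i != ord_max -> (i < k.*2)%N.
  by rewrite -(inj_eq val_inj) /= => ne; have := ltn_ord i; rewrite ltnS leq_eqVlt (negbTE ne).
rewrite (bigD1 ord_max) //= [X in _ + X]big1 ?addr0; last first.
  by move=> i /below_max hi; apply: big1 => j _; rewrite adj_hyp_mx_eq0 ?hi ?mulr0.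
rewrite (bigD1 ord_max) //= [X in _ + X]big1 ?addr0; last first.
  by move=> j /andP [le /below_max lt]; have := leq_ltn_trans le lt; rewrite ltnn.
by rewrite /qf_coef eqxx mulf_neq0 ?adj_hyp_mx_max.
Qed.

Section Characteristic2.

Variables (F : finFieldType) (charF : (2 \in [pchar F])%N) (n : nat).
Implicit Types (M : 'M[F]_n) (u : 'rV[F]_n).

(* Squaring is the Frobenius automorphism, a bijection of the finite field. *)
Lemma sqrt_char2 : exists sqrt : F -> F, forall x, sqrt x ^+ 2 = x.
Proof.
have sq_inj : injective (fun x : F => x ^+ 2).
  move=> x y /= e; apply/eqP; rewrite -subr_eq0.
  suff : (x - y) ^+ 2 == 0 by rewrite expf_eq0.
  by apply/eqP; rewrite -(pFrobenius_autE charF) rmorphB /= !pFrobenius_autE e subrr.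
by have [sqrt _ sqrtK] := injF_bij sq_inj; exists sqrt.
Qed.

(* When the polar form vanishes, the form is the square of a single linear
   form sum_i sqrt(M_ii) x_i. *)
Lemma factors_polar0 M r : polar_mx M = 0 -> qform_factors M r.+1.
Proof.
move=> polM; have [sqrt sqrtK] := sqrt_char2.
pose L : 'M[F]_(n, r.+1) := \matrix_(i, c) (if c == 0 then sqrt (M i i) else 0).
pose B : 'M[F]_(r.+1) := delta_mx 0 0.
exists B, L => u.
have qB (x : 'rV[F]_(r.+1)) : qform B x = x 0 0 ^+ 2.
  rewrite /qform /B -(mul_delta_mx (0 : 'I_1)) mulmxA -colE -mulmxA -rowE -tr_col.
  by rewrite mxE big_ord1 !mxE expr2.
rewrite qB mxE -(pFrobenius_autE charF) rmorph_sum qform_coef /=.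
apply: eq_bigr => i _; rewrite (bigD1 i) //= [X in _ + X]big1 ?addr0; last first.
  move=> j /andP [_ nij]; rewrite /qf_coef eq_sym (negbTE nij).
  by move/matrixP: polM => /(_ i j); rewrite !mxE => ->; rewrite mul0r.
by rewrite /qf_coef eqxx mxE eqxx pFrobenius_autE exprMn sqrtK mulrC expr2.
Qed.

Lemma bform_alt M x : bform M x x = 0.
Proof. by rewrite bform_diag mulrn_pchar. Qed.

Lemma hyperbolic_pair M : polar_mx M != 0 -> exists e f, bform M e f = 1.
Proof.
move=> polM; have /existsP [i /existsP [j nz]] : [exists i, exists j, polar_mx M i j != 0].
  apply: contraR polM => /existsPn none; apply/eqP/matrixP => i j.
  by move/existsPn: (none i) => /(_ j); rewrite negbK => /eqP ->; rewrite mxE.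
exists ((polar_mx M i j)^-1 *: delta_mx 0 i), (delta_mx 0 j).
by rewrite bformZl bform_delta2 mulVf.
Qed.

Definition normal_frame M k := exists C : 'M[F]_(k.*2.+1, n),
  polar_mx (C *m M *m C^T) = hyp_mx F k /\ (C *m M *m C^T) ord_max ord_max != 0.

Section HyperbolicSplitting.

Variables (M : 'M[F]_n) (e f : 'rV[F]_n).
Hypothesis bform_ef : bform M e f = 1.

Lemma bform_fe : bform M f e = 1.
Proof. by rewrite bformC. Qed.

(* The projection onto the orthogonal complement of the plane <e, f>. *)
Definition orth_proj : 'M[F]_n :=
  1%:M - (polar_mx M *m f^T) *m e - (polar_mx M *m e^T) *m f.

Lemma orth_projE u : u *m orth_proj = u - bform M u f *: e - bform M u e *: f.
Proof.
rewrite /orth_proj !mulmxBr mulmx1 !mulmxA.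
by rewrite (mx11_scalar (u *m _ *m f^T)) (mx11_scalar (u *m _ *m e^T)) !mul_scalar_mx.
Qed.

Lemma bform_orth_proj_l u : bform M (u *m orth_proj) e = 0.
Proof.
rewrite orth_projE !bformDl !bformNl !bformZl bform_alt bform_fe.
by rewrite mulr0 subr0 mulr1 subrr.
Qed.

Lemma bform_orth_proj_r u : bform M (u *m orth_proj) f = 0.
Proof.
rewrite orth_projE !bformDl !bformNl !bformZl bform_alt bform_ef.
by rewrite mulr0 subr0 mulr1 subrr.
Qed.

Lemma qform_orth_split u :
  qform M u = qform M (u *m orth_proj) + (bform M u f ^+ 2 * qform M e
    + bform M u e ^+ 2 * qform M f + bform M u f * bform M u e).
Proof.
have {1}-> : u = u *m orth_proj + (bform M u f *: e + bform M u e *: f).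
  by rewrite orth_projE -[u - _ - _]addrA -opprD subrK.
rewrite qformD bformDr !bformZr bform_orth_proj_l bform_orth_proj_r !mulr0 addr0.
by rewrite qformD !qformZ bformZl bformZr bform_ef mulr1 addr0.
Qed.

Lemma factors_orth_split r :
  qform_factors (orth_proj *m M *m orth_proj^T) r -> qform_factors M (2 + r).
Proof.
pose B1 : 'M[F]_(1 + 1) := block_mx (qform M e)%:M 1 0 (qform M f)%:M.
apply: (qform_factors_add (B1 := B1) (L1 := row_mx (polar_mx M *m f^T) (polar_mx M *m e^T))).
move=> u; rewrite qform_congr mul_mx_row qform_block !qform_scalar1 mulmx1 mulmx0 mul0mx.
rewrite scalar_prod1 !mulmxA -/(bform M u f) -/(bform M u e) mxE.
by rewrite qform_orth_split; ring.
Qed.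

Lemma normal_frame_orth_split k :
  normal_frame (orth_proj *m M *m orth_proj^T) k -> normal_frame M k.+1.
Proof.
case=> C' [polC' nzC'].
pose X : 'M[F]_(2, n) := \matrix_(a, b) (if a == 0 :> nat then e 0 b else f 0 b).
have rowX (a : 'I_2) : row a X = if a == 0 :> nat then e else f.
  by apply/rowP => b; rewrite !mxE; case: ifP.
pose C : 'M[F]_(2 + k.*2.+1, n) := col_mx X (C' *m orth_proj).
exists C; split.
  change (polar_mx (C *m M *m C^T) = hyp_mx F k.+1 :> 'M_(2 + k.*2.+1)).
  rewrite hyp_mxSS; apply/matrixP => a b; rewrite polar_congr_entry -[a]splitK -[b]splitK.
  case: (split a) => a'; case: (split b) => b'.
  - rewrite !rowKu !rowX block_mxEul mxE.
    by case: a' => [[|[|]]] //= ha; case: b' => [[|[|]]] //= hb; rewrite ?bform_alt ?bform_fe.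
  - rewrite rowKu rowKd rowX row_mul block_mxEur mxE bformC.
    by case: ifP => _; rewrite ?bform_orth_proj_l ?bform_orth_proj_r.
  - rewrite rowKu rowKd rowX row_mul block_mxEdl mxE.
    by case: ifP => _; rewrite ?bform_orth_proj_l ?bform_orth_proj_r.
  - by rewrite !rowKd !row_mul block_mxEdr -bform_congr -polar_congr_entry polC'.
have -> : (ord_max : 'I_(k.+1.*2.+1)) = rshift 2 (ord_max : 'I_(k.*2.+1)) by apply: val_inj.
rewrite qform_row_entry.
change (qform M (row (rshift 2 ord_max) (C : 'M_(2 + k.*2.+1, n))) != 0).
by rewrite rowKd row_mul -qform_congr -qform_row_entry.
Qed.

End HyperbolicSplitting.

(* Split off hyperbolic planes until the polar form vanishes. *)
Lemma normal_frame_or_factors k M : normal_frame M k \/ qform_factors M k.*2.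
Proof.
elim: k M => [|k IH] M.
  have [/existsP [u qu]|/existsPn q0] := boolP [exists u, qform M u != 0].
    left; exists u; split; last by rewrite ord1 qform_row_entry row_id.
    by apply/matrixP => i j; rewrite !ord1 !mxE /= addrr_pchar2.
  right; exists 0, 0 => u; move: (q0 u); rewrite negbK => /eqP ->.
  by rewrite mulmx0 qform0.
have [polM0|/hyperbolic_pair [e [f ef]]] := eqVneq (polar_mx M) 0.
  by right; apply: factors_polar0.
have [nf|fac] := IH (orth_proj M e f *m M *m (orth_proj M e f)^T).
  by left; exact: (normal_frame_orth_split ef nf).
by right; exact: (factors_orth_split ef fac).
Qed.

End Characteristic2.

Section LinearMatrixFamilies.

Variables (F : comNzRingType) (V : finType).

Definition lin_mx_fun p q (Mf : (V -> F) -> 'M[F]_(p, q)) :=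
  forall x y, lin_fun (fun a => Mf a x y).

Lemma lin_mx_mul p q r s (C : 'M[F]_(p, q)) (Mf : (V -> F) -> 'M[F]_(q, r)) (D : 'M[F]_(r, s)) :
  lin_mx_fun Mf -> lin_mx_fun (fun a => C *m Mf a *m D).
Proof.
move=> linM x y.
apply: (lin_fun_ext (f := fun a => \sum_l D l y * \sum_t C x t * Mf a t l)).
  by move=> a; rewrite !mxE; apply: eq_bigr => l _; rewrite mxE mulrC.
by apply: lin_fun_sum => l; apply: lin_fun_sum => t; apply: linM.
Qed.

Lemma lin_mx_polar p (Mf : (V -> F) -> 'M[F]_p) :
  lin_mx_fun Mf -> lin_mx_fun (fun a => polar_mx (Mf a)).
Proof.
move=> linM x y; apply: (lin_fun_ext (f := fun a => Mf a x y + Mf a y x)).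
  by move=> a; rewrite !mxE.
exact: lin_funD.
Qed.

Lemma lin_fun_qf_coef p (Mf : (V -> F) -> 'M[F]_p) x y :
  lin_mx_fun Mf -> lin_fun (fun a => qf_coef (Mf a) x y).
Proof. by move=> linM; rewrite /qf_coef; case: eqP => _; [|apply: lin_funD]. Qed.

(* D is a homogeneous polynomial of degree p in the entries of a linear
   family: expand the adjugate by the Leibniz formula, so that each term is
   a product of p linear forms. *)
Lemma poly_fun_hdisc k (Mf : (V -> F) -> 'M[F]_(k.+1)) :
  lin_mx_fun Mf -> poly_fun k.+1 (fun a => hdisc (Mf a)).
Proof.
move=> linM; apply: poly_fun_sum => i _; apply: poly_fun_sum => j _.
pose Y a : 'M[F]_k := row' j (col' i (polar_mx (Mf a))).
have linY : lin_mx_fun Y.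
  move=> x y; apply: (lin_fun_ext (f := fun a => polar_mx (Mf a) (lift j x) (lift i y))).
    by move=> a; rewrite /Y !mxE.
  exact: lin_mx_polar.
apply: (poly_fun_ext (f := fun a => \sum_(s : 'S_k) ((-1) ^+ (j + i) * (-1) ^+ s) *
    (qf_coef (Mf a) i j * \prod_(t < k) Y a t (s t)))).
  move=> a; rewrite [\adj _ i j]mxE /cofactor /determinant -/(Y a).
  by rewrite !mulr_sumr; apply: eq_bigr => s _; rewrite mulrCA -mulrA.
apply: poly_fun_sum => s _; apply: poly_funZ.
pose L (t : 'I_k.+1) : (V -> F) -> F :=
  if unlift ord0 t is Some t' then fun a => Y a t' (s t') else fun a => qf_coef (Mf a) i j.
apply: (poly_fun_ext (f := fun a => \prod_(t < k.+1) L t a)).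
  move=> a; rewrite big_ord_recl /L unlift_none; congr (_ * _).
  by apply: eq_bigr => t _; rewrite liftK.
apply: poly_fun_prod => t; rewrite /L; case: unlift => [t'|]; first exact: linY.
exact: lin_fun_qf_coef.
Qed.

End LinearMatrixFamilies.

Lemma lin_mx_coef_mx (F : comNzRingType) n : lin_mx_fun (fun a : qvar n -> F => coef_mx a).
Proof.
move=> x y; apply: (lin_fun_ext (f := fun a => if insub (x, y) is Some v then a v else 0)).
  by move=> a; rewrite mxE.
by case: insub => [v|]; [exact: lin_fun_coord | exact: lin_fun0].
Qed.

(* Factoring through fewer than p forms leaves a nonzero kernel vector w of
   the substitution; such a w is isotropic and lies in the polar radical. *)
Lemma radical_of_factors (F : fieldType) p r (N : 'M[F]_p) :
  (r < p)%N -> qform_factors N r ->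
  exists2 w : 'rV[F]_p, w != 0 & w *m polar_mx N = 0 /\ qform N w = 0.
Proof.
move=> ltrp [B [L hN]].
have /existsP [i wnz] : [exists i, row i (kermx L) != 0].
  apply: contraR (_ : kermx L != 0) => [/existsPn none|].
    by apply/eqP/row_matrixP => i; rewrite row0; apply/eqP; rewrite -[_ == 0]negbK none.
  by rewrite -mxrank_eq0 mxrank_ker subn_eq0 -ltnNge (leq_ltn_trans (rank_leq_col L)).
set w := row i (kermx L); have wL : w *m L = 0 by apply/sub_kermxP; exact: row_sub.
have shift y : qform N (y + w) = qform N y by rewrite !hN mulmxDl wL addr0.
have qw : qform N w = 0 by rewrite -(add0r w) shift qform0.
exists w => //; split => //; apply/rowP => j.
rewrite -bform_delta mxE; apply: (addrI (qform N (delta_mx 0 j))).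
by rewrite addr0 -[RHS](shift _) qformD qw addr0 bformC.
Qed.

Lemma qform_factors_congr (F : comNzRingType) m n r (M : 'M[F]_n) (C : 'M[F]_(m, n)) :
  qform_factors M r -> qform_factors (C *m M *m C^T) r.
Proof. by case=> B [L hM]; exists B, (C *m L) => u; rewrite qform_congr hM mulmxA. Qed.

Lemma hdisc_factors (F : fieldType) p r (N : 'M[F]_p) :
  (r < p)%N -> qform_factors N r -> hdisc N = 0.
Proof.
by move=> ltrp /(radical_of_factors ltrp) [w wnz [wN qw]]; exact: hdisc_radical wN qw.
Qed.

Lemma In_map (T : eqType) (U : Type) (f : T -> U) (s : seq T) y :
  List.In y [seq f x | x <- s] <-> exists2 x, x \in s & y = f x.
Proof.
elim: s y => [|x s IH] y /=; first by split=> // -[].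
split.
- case=> [<-|/IH [z zs ->]]; first by exists x; rewrite ?mem_head.
  by exists z; rewrite // in_cons zs orbT.
- case=> z; rewrite in_cons => /orP [/eqP -> ->|zs ->]; first by left.
  by right; apply/IH; exists z.
Qed.

Unset Implicit Arguments.

Theorem lemma1 (F : finFieldType) (n R : nat)
    (charF : (2 \in [pchar F])%N) (hn : (0 < n)%N) (hR : ~~ odd R) :
  exists S : seq (hpoly F (qvar n) R.+1),
    forall a : qvar n -> F,
      (forall p, List.In p S -> heval p a = 0) <-> (qf_rank a <= R)%N.
Proof.
have [k ->] : exists k, R = k.*2 by exists R./2; rewrite -[LHS]odd_double_half (negbTE hR).
pose D (C : 'M[F]_(k.*2.+1, n)) :=
  poly_fun_hdisc (lin_mx_mul C C^T (@lin_mx_coef_mx F n)).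
exists [seq sval (D C) | C <- enum 'M[F]_(k.*2.+1, n)] => a; split => [vanish|].
  rewrite qf_rank_leP; have [[C [polC nzC]]|fac] := normal_frame_or_factors charF k (coef_mx a).
    have := hdisc_hyp_mx polC nzC; rewrite -(svalP (D C)) vanish ?eqxx //.
    by apply/In_map; exists C; rewrite ?mem_enum.
  by exists k.*2.
case/qf_rank_leP => r ler fac p /In_map [C _ ->]; rewrite (svalP (D C)) /=.
exact: hdisc_factors (qform_factors_congr C fac).
Qed.
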